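(* Let $d\ge k\ge1$, $A\in\mathbb{R}^{d\times k}$ with $A^TA=I_k$, $\beta\in(0,1)$, and $\theta^*=\sqrt{1-\beta}\,AA^T$. Let $m\in\{0,1\}^d$ be a mask and put $\lambda_{\max}:=\|AA^TD(m)\|$ (spectral norm). Let $x_0\in\mathbb{R}^d$ be any point in the column space of $A$ (the known image), and let $x_1\in\mathbb{R}^d$ be arbitrary (e.g. a draw from $\mathcal N(0,I_d)$). Define the resampling iterates $$x_0^{(0)}=\tfrac{1}{\sqrt{1-\beta}}\theta^*x_1=AA^Tx_1,\qquad x_0^{(r)}=\tfrac{1}{\sqrt{1-\beta}}\theta^*\big(D(m)\,x_0^{(r-1)}+D(\mathbf 1-m)\,x_0\big)\quad(r\ge1).$$ Then for every $r\ge 0$, $$\|x_0^{(r)}-x_0\|\le \lambda_{\max}^r\,\frac{\|\theta^*\|\,\|x_1-x_0\|}{\sqrt{1-\beta}}.$$ Consequently, if $0<\lambda_{\max}<1$ (in particular $AA^TD(m)\prec I_d$ in the sense $\lambda_{\max}<1$) and $\epsilon>0$, then $\|x_0^{(r)}-x_0\|\le\epsilon$ for all $$r\ \ge\ \frac{\log\!\Big(\frac{\|\theta^*\|\,\|x_1-x_0\|}{\epsilon\sqrt{1-\beta}}\Big)}{\log(1/\lambda_{\max})},$$ i.e. the number of resampling steps needed for an $\epsilon$-accurate inpainting is $\mathcal O\big(\log(\|\theta^*\|\|x_1-x_0\|/(\epsilon\sqrt{1-\beta}))/\log(1/\lambda_{\max})\big)$, independently of which valid mask $m$ is used. *)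

From HB Require Import structures.
From mathcomp Require Import all_boot all_order all_algebra.
From mathcomp Require Import all_classical all_reals.
From mathcomp Require Import exp.
Set Implicit Arguments. Unset Strict Implicit. Unset Printing Implicit Defensive.
Import Order.TTheory GRing.Theory Num.Theory.
Local Open Scope ring_scope.
Local Open Scope classical_set_scope.

Definition enorm {R : realType} {n : nat} (x : 'cV[R]_n) : R :=
  Num.sqrt (\sum_(i < n) x i 0 ^+ 2).

Definition specnorm {R : realType} {m n : nat} (M : 'M[R]_(m, n)) : R :=
  sup [set enorm (M *m x) | x in [set x : 'cV[R]_n | enorm x <= 1]].

Definition Dmx {R : realType} {n : nat} (v : 'cV[R]_n) : 'M[R]_n := diag_mx v^T.

Definition theta_star {R : realType} {d k : nat} (A : 'M[R]_(d, k)) (beta : R)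
  : 'M[R]_d := Num.sqrt (1 - beta) *: (A *m A^T).

Fixpoint resample {R : realType} {d k : nat} (A : 'M[R]_(d, k)) (beta : R)
  (m x0 x1 : 'cV[R]_d) (r : nat) : 'cV[R]_d :=
  match r with
  | 0 => (Num.sqrt (1 - beta))^-1 *: (theta_star A beta *m x1)
  | r'.+1 => (Num.sqrt (1 - beta))^-1 *:
      (theta_star A beta *m (Dmx m *m resample A beta m x0 x1 r'
                             + Dmx (const_mx 1 - m) *m x0))
  end.

From HB Require Import structures.
From mathcomp Require Import all_boot all_order all_algebra.
From mathcomp Require Import all_classical all_reals.
From mathcomp Require Import exp.
From mathcomp Require Import ring.
Import Order.TTheory GRing.Theory Num.Theory.
Local Open Scope ring_scope.

(* Write P := A A^T, the orthogonal projection onto the column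
   space of A (A^T A = I).  Since theta* = sqrt(1-beta) P, the factor
   1/sqrt(1-beta) cancels and the iterates are x^(0) = P x1 and
   x^(r+1) = P (D(m) x^(r) + D(1-m) x0).  As x0 = P x0 and the masks D(m),
   D(1-m) sum to the identity, the error e_r := x^(r) - x0 obeys
   e_0 = P (x1 - x0) and the linear recursion e_(r+1) = (P D(m)) e_r.
   Hence ||e_r|| <= lmax^r ||e_0|| by the operator bound of the spectral
   norm, and ||e_0|| = ||theta* (x1 - x0)|| / sqrt(1-beta) gives the first
   claim. *)

Section EuclideanNorm.
Context {R : realType}.

Lemma enorm_ge0 {n} (x : 'cV[R]_n) : 0 <= enorm x.
Proof. exact: sqrtr_ge0. Qed.

Lemma enorm0 {n} : enorm (0 : 'cV[R]_n) = 0.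
Proof. by rewrite /enorm big1 ?sqrtr0 // => i _; rewrite mxE expr0n. Qed.

Lemma enormZ {n} (a : R) (x : 'cV[R]_n) : enorm (a *: x) = `|a| * enorm x.
Proof.
rewrite /enorm; under eq_bigr => i _ do rewrite mxE exprMn.
by rewrite -mulr_sumr sqrtrM ?sqr_ge0 // sqrtr_sqr.
Qed.

Lemma enorm_coord {n} (x : 'cV[R]_n) j : `|x j 0| <= enorm x.
Proof.
rewrite -sqrtr_sqr /enorm ler_sqrt; last by apply: sumr_ge0 => i _; exact: sqr_ge0.
by rewrite (bigD1 j) //= lerDl; apply: sumr_ge0 => i _; exact: sqr_ge0.
Qed.

Lemma enorm_eq0 {n} (x : 'cV[R]_n) : enorm x = 0 -> x = 0.
Proof.
move=> x0; apply/matrixP => i j; rewrite (ord1 j) mxE; apply/eqP.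
by rewrite -normr_le0 -x0 enorm_coord.
Qed.

Lemma enorm_bound {n} (x : 'cV[R]_n) (a : 'I_n -> R) :
  (forall i, `|x i 0| <= a i) -> enorm x <= Num.sqrt (\sum_i a i ^+ 2).
Proof.
move=> xa; rewrite /enorm ler_sqrt; last by apply: sumr_ge0 => i _; exact: sqr_ge0.
apply: ler_sum => i _; rewrite -(real_normK (num_real (x i 0))) !expr2.
exact: ler_pM.
Qed.

End EuclideanNorm.

Section SpectralNorm.
Context {R : realType}.

(* The set whose supremum defines [specnorm M] is nonempty and bounded
   (by the Frobenius-type bound sqrt (sum_i (sum_j |M_ij|)^2)). *)
Lemma spec_has_sup {m n} (M : 'M[R]_(m, n)) :
  has_sup [set enorm (M *m x) | x in [set x : 'cV[R]_n | enorm x <= 1]].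
Proof.
split; first by exists (enorm (M *m 0)), 0; rewrite //= enorm0.
exists (Num.sqrt (\sum_i (\sum_j `|M i j|) ^+ 2)) => _ [x /= x1 <-].
apply: enorm_bound => i; rewrite mxE (le_trans (ler_norm_sum _ _ _)) //.
apply: ler_sum => j _; rewrite normrM -[leRHS]mulr1 ler_wpM2l //.
by apply: le_trans x1; apply: enorm_coord.
Qed.

Lemma specnorm_ge0 {m n} (M : 'M[R]_(m, n)) : 0 <= specnorm M.
Proof.
rewrite -(@enorm0 R m) -(mulmx0 _ M).
by apply: sup_upper_bound (spec_has_sup M) _ _; exists 0; rewrite //= enorm0.
Qed.

Lemma specnorm_le {m n} (M : 'M[R]_(m, n)) (y : 'cV[R]_n) :
  enorm (M *m y) <= specnorm M * enorm y.
Proof.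
have [/enorm_eq0 ->|ny] := eqVneq (enorm y) 0.
  by rewrite mulmx0 !enorm0 mulr0.
have yp : 0 < enorm y by rewrite lt_def ny enorm_ge0.
have unit_y : enorm ((enorm y)^-1 *: y) <= 1.
  by rewrite enormZ ger0_norm ?invr_ge0 ?enorm_ge0 // mulVf.
have : enorm (M *m ((enorm y)^-1 *: y)) <= specnorm M.
  by apply: sup_upper_bound (spec_has_sup M) _ _; exists ((enorm y)^-1 *: y).
rewrite -scalemxAr enormZ ger0_norm ?invr_ge0 ?enorm_ge0 //.
by rewrite mulrC -ler_pdivlMr ?invr_gt0 // invrK.
Qed.

Lemma linear_recursion_decay {n} (M : 'M[R]_n) (e : nat -> 'cV[R]_n) :
  (forall r, e r.+1 = M *m e r) ->
  forall r, enorm (e r) <= specnorm M ^+ r * enorm (e 0%N).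
Proof.
move=> eS; elim=> [|r IH]; first by rewrite expr0 mul1r.
rewrite eS exprS -mulrA (le_trans (specnorm_le _ _)) //.
by rewrite ler_wpM2l ?specnorm_ge0.
Qed.

End SpectralNorm.

Section ResamplingError.
Context {R : realType} {d k : nat}.
Variables (A : 'M[R]_(d, k)) (beta : R).
Variables (m x0 x1 : 'cV[R]_d).
Hypothesis hA : A^T *m A = 1%:M.
Hypothesis hbeta1 : beta < 1.
Hypothesis hx0 : exists z : 'cV[R]_k, x0 = A *m z.

Let s := Num.sqrt (1 - beta).
Let P := A *m A^T.
Let e r := resample A beta m x0 x1 r - x0.

Lemma sqrt_one_sub_beta_gt0 : 0 < s.
Proof. by rewrite sqrtr_gt0 subr_gt0. Qed.

Lemma proj_fixes_x0 : P *m x0 = x0.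
Proof. by case: hx0 => z ->; rewrite /P -!mulmxA (mulmxA _ A) hA mul1mx. Qed.

Lemma theta_star_normalized (v : 'cV[R]_d) :
  s^-1 *: (theta_star A beta *m v) = P *m v.
Proof.
rewrite /theta_star -/s -/P -scalemxAl scalerA mulVf ?scale1r //.
by rewrite gt_eqF ?sqrt_one_sub_beta_gt0.
Qed.

(* The masks D(m) and D(1-m) decompose the identity. *)
Lemma mask_split (u : 'cV[R]_d) :
  Dmx m *m u + Dmx (const_mx 1 - m) *m x0 = Dmx m *m (u - x0) + x0.
Proof.
apply/matrixP => i j; rewrite /Dmx !mul_diag_mx !mxE (ord1 j); ring.
Qed.

Lemma resample_err0 : e 0%N = s^-1 *: (theta_star A beta *m (x1 - x0)).
Proof. by rewrite /e /= !theta_star_normalized mulmxBr proj_fixes_x0. Qed.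

Lemma resample_errS r : e r.+1 = (P *m Dmx m) *m e r.
Proof.
by rewrite /e /= theta_star_normalized mask_split mulmxDr proj_fixes_x0 addrK mulmxA.
Qed.

Lemma resample_error_bound r :
  enorm (e r) <= specnorm (P *m Dmx m) ^+ r
                 * (specnorm (theta_star A beta) * enorm (x1 - x0)) / s.
Proof.
have s_inv_ge0 : 0 <= s^-1 by rewrite invr_ge0 ltW ?sqrt_one_sub_beta_gt0.
rewrite (le_trans (linear_recursion_decay _ _ resample_errS r)) // -mulrA.
rewrite ler_wpM2l ?exprn_ge0 ?specnorm_ge0 // resample_err0 enormZ.
by rewrite ger0_norm // mulrC ler_wpM2r // specnorm_le.
Qed.

End ResamplingError.

Lemma geometric_steps (R : realType) (l C eps : R) (r : nat) :
  0 < l -> l < 1 -> 0 <= C -> 0 < eps ->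
  ln (C / eps) / ln l^-1 <= r%:R -> l ^+ r * C <= eps.
Proof.
move=> l0 l1 C0 eps0 hr.
have [->|Cnz] := eqVneq C 0; first by rewrite mulr0 ltW.
have Cp : 0 < C by rewrite lt_def Cnz C0.
have lr0 : 0 < l ^+ r by rewrite exprn_gt0.
have ln_pos : 0 < ln l^-1 by apply: ln_gt0; rewrite invf_gt1.
have ratio_le : C / eps <= l^-1 ^+ r.
  move: hr; rewrite ler_pdivrMr // mulr_natl -lnXn ?invr_gt0 // ler_ln //.
    by rewrite posrE divr_gt0.
  by rewrite posrE exprn_gt0 // invr_gt0.
move: ratio_le; rewrite exprVn ler_pdivrMr // => C_le.
have lr_inv0 : 0 < l ^- r by rewrite invr_gt0.
by rewrite -(ler_pM2l lr_inv0) mulrA mulVf ?mul1r ?gt_eqF.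
Qed.

Theorem theorem2 (R : realType) (d k : nat) (A : 'M[R]_(d, k)) (beta : R)
  (m x0 x1 : 'cV[R]_d)
  (hk : (1 <= k)%N) (hkd : (k <= d)%N)
  (hA : A^T *m A = 1%:M)
  (hbeta0 : 0 < beta) (hbeta1 : beta < 1)
  (hm : forall i, m i 0 = 0 \/ m i 0 = 1)
  (hx0 : exists z : 'cV[R]_k, x0 = A *m z) :
  let lmax := specnorm (A *m A^T *m Dmx m) in
  (forall r : nat,
     enorm (resample A beta m x0 x1 r - x0)
       <= lmax ^+ r * (specnorm (theta_star A beta) * enorm (x1 - x0))
                      / Num.sqrt (1 - beta)) /\
  (0 < lmax -> lmax < 1 -> forall eps : R, 0 < eps ->
     forall r : nat,
       ln (specnorm (theta_star A beta) * enorm (x1 - x0)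
             / (eps * Num.sqrt (1 - beta))) / ln (lmax^-1) <= r%:R ->
       enorm (resample A beta m x0 x1 r - x0) <= eps).
Proof.
move=> lmax.
have bound := resample_error_bound A beta m x0 x1 hA hbeta1 hx0.
split=> // lmax0 lmax1 eps eps0 r hr.
have s0 : 0 < Num.sqrt (1 - beta) by exact: sqrt_one_sub_beta_gt0.
have C0 : 0 <= specnorm (theta_star A beta) * enorm (x1 - x0).
  by rewrite mulr_ge0 ?specnorm_ge0 ?enorm_ge0.
apply: le_trans (bound r) _; rewrite ler_pdivrMr //.
exact: (@geometric_steps R lmax _ _ r lmax0 lmax1 C0 (mulr_gt0 eps0 s0) hr).
Qed.
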